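(* Let $H$ be a real Hilbert space with inner product $\langle\cdot,\cdot\rangle$, let $\mathcal{I}$ be a finite index set, and let $J, g_i : H\to\mathbb{R}$ ($i\in\mathcal{I}$) be $\mathcal{C}^1$ functions. Consider the problem of minimizing $J(u)$ subject to $g_i(u)\le 0$ for all $i\in\mathcal{I}$, with feasible set $\Omega=\{u\in H: g_i(u)\le 0\ \forall i\in\mathcal{I}\}$. Assume that for every $u\in\Omega$ with $I_A(u)\neq\emptyset$ the vectors $\{g_i'(u): i\in I_A(u)\}$ are linearly independent. Then a point $u\in\Omega$ is a KKT point of this problem if and only if $d_A(u)=0$.
   Context: $J'(u)$ and $g_i'(u)$ denote gradients (elements of $H$). For $u\in\Omega$, the active index set is $I_A(u)=\{i\in\mathcal{I}: g_i(u)=0\}$, and $C_A(u)=\{\sum_{i\in I_A(u)} a_i g_i'(u): a_i\ge 0\}$ is the polyhedral cone generated by the active gradients ($C_A(u)=\{0\}$ if $I_A(u)=\emptyset$). For a closed convex set $C\subset H$, $\mathbb{P}_C(v)$ denotes the metric projection of $v$ onto $C$. The correctable steepest descent direction is $d_A(u)=-J'(u)-\mathbb{P}_{C_A(u)}(-J'(u))$. A point $u\in\Omega$ is a KKT point if there exist $\mu_i\ge 0$ ($i\in\mathcal{I}$) with $-J'(u)=\sum_{i\in\mathcal{I}}\mu_i g_i'(u)$ and $\mu_i g_i(u)=0$ for all $i\in\mathcal{I}$. *)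

From HB Require Import structures.
From mathcomp Require Import all_boot all_order all_algebra.
From mathcomp Require Import all_classical all_reals all_analysis.
Set Implicit Arguments. Unset Strict Implicit. Unset Printing Implicit Defensive.
Import Order.TTheory GRing.Theory Num.Theory.
Import numFieldNormedType.Exports.
Local Open Scope classical_set_scope.
Local Open Scope ring_scope.

(* ip is a (real) inner product inducing the norm of H; together with
   completeness of H this makes (H, ip) a real Hilbert space. *)
Definition is_inner_product (R : realType) (H : normedModType R)
  (ip : H -> H -> R) : Prop :=
  (forall x y, ip x y = ip y x) /\
  (forall (a : R) (x y z : H), ip (a *: x + y) z = a * ip x z + ip y z) /\
  (forall x, ip x x = `|x| ^+ 2).

Definition is_gradient (R : realType) (H : normedModType R)
  (ip : H -> H -> R) (J : H -> R) (J' : H -> H) : Prop :=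
  forall u, differentiable J u /\ forall v, 'd J u v = ip (J' u) v.

Definition C1_with_gradient (R : realType) (H : normedModType R)
  (ip : H -> H -> R) (J : H -> R) (J' : H -> H) : Prop :=
  is_gradient ip J J' /\ continuous J'.

Definition feasible (R : realType) (H : normedModType R) (I : finType)
  (g : I -> H -> R) (u : H) : Prop := forall i, g i u <= 0.

Definition active (R : realType) (H : normedModType R) (I : finType)
  (g : I -> H -> R) (u : H) (i : I) : bool := g i u == 0.

(* C_A(u): cone generated by the active gradients ({0} if no active index) *)
Definition active_cone (R : realType) (H : normedModType R) (I : finType)
  (g : I -> H -> R) (g' : I -> H -> H) (u : H) : set H :=
  [set v | exists a : I -> R, (forall i, 0 <= a i) /\
     v = \sum_(i | active g u i) a i *: g' i u].

(* metric projection onto C: a point of C nearest to v (unique for closed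
   convex C in a Hilbert space); chosen by xget (default v if none exists). *)
Definition metric_proj (R : realType) (H : normedModType R)
  (C : set H) (v : H) : H :=
  xget v [set p | C p /\ forall q, C q -> `|v - p| <= `|v - q|].

Definition dA (R : realType) (H : normedModType R) (I : finType)
  (J' : H -> H) (g : I -> H -> R) (g' : I -> H -> H) (u : H) : H :=
  - J' u - metric_proj (active_cone g g' u) (- J' u).

Definition KKT_point (R : realType) (H : normedModType R) (I : finType)
  (g : I -> H -> R) (J' : H -> H) (g' : I -> H -> H) (u : H) : Prop :=
  feasible g u /\
  exists mu : I -> R, (forall i, 0 <= mu i) /\
    - J' u = \sum_i mu i *: g' i u /\ (forall i, mu i * g i u = 0).

Definition active_lin_indep (R : realType) (H : normedModType R) (I : finType)
  (g : I -> H -> R) (g' : I -> H -> H) (u : H) : Prop :=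
  forall a : I -> R, \sum_(i | active g u i) a i *: g' i u = 0 ->
    forall i, active g u i -> a i = 0.

From HB Require Import structures.
From mathcomp Require Import all_boot all_order all_algebra.
From mathcomp Require Import all_classical all_reals all_analysis.
From mathcomp Require Import lra.
Set Implicit Arguments. Unset Strict Implicit. Unset Printing Implicit Defensive.
Import Order.TTheory GRing.Theory Num.Theory.
Import numFieldNormedType.Exports.
Import ArrowAsProduct.
Local Open Scope classical_set_scope.
Local Open Scope ring_scope.

(* Complementary slackness kills the multipliers of inactive constraints, so u
   is a KKT point iff -J'(u) lies in the cone C_A(u), and d_A(u) = 0 iff the
   nearest point of C_A(u) to -J'(u) is -J'(u) itself, i.e. again iff -J'(u)
   lies in C_A(u) -- provided a nearest point exists.  It does: by linear
   independence, |sum_i a_i g_i'(u)| >= m max_i |a_i| for some m > 0 (minimise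
   over the compact unit sphere of coefficients), so the distance to -J'(u)
   need only be minimised over a compact box of coefficients.  The metric
   projection is defined through the norm alone. *)

Section NearestPoint.
Variables (R : realType) (H : normedModType R).

Definition nearest_point (C : set H) (v p : H) : Prop :=
  C p /\ forall q, C q -> `|v - p| <= `|v - q|.

Lemma metric_proj_id (C : set H) (v : H) :
  (exists p, nearest_point C v p) -> metric_proj C v = v <-> C v.
Proof.
move=> [p0 p0_nearest]; rewrite /metric_proj.
case: xgetP => [p _ [Cp p_min]|no_nearest]; last by case: (no_nearest p0).
split=> [<- //|Cv]; apply/eqP; rewrite eq_sym -subr_eq0 -normr_le0.
by have := p_min v Cv; rewrite subrr normr0.
Qed.

End NearestPoint.

Section FinitelyGeneratedCone.
Variables (R : realType) (H : normedModType R) (I : finType).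
Variables (P : pred I) (w : I -> H).

Definition lincomb (a : I -> R) : H := \sum_(i | P i) a i *: w i.

Definition gen_cone : set H :=
  [set v | exists a : I -> R, (forall i, 0 <= a i) /\ v = lincomb a].

Lemma lincomb_continuous : continuous lincomb.
Proof.
apply: continuous_big => [|i _ a]; first exact: add_continuous.
exact/continuousZr_tmp/proj_continuous.
Qed.

Hypothesis lincomb_free : forall a, lincomb a = 0 -> forall i, P i -> a i = 0.

Lemma lincomb_unit_bounded_below :
  exists2 m : R, 0 < m & forall b j, P j -> b j = 1 ->
    (forall i, `|b i| <= 1) -> m <= `|lincomb b|.
Proof.
have [[j0 Pj0]|noP] := pselect (exists j, P j); last first.
  by exists 1 => // b j Pj; case: noP; exists j.
pose box (j i : I) : set R := if i == j then [set 1] else `[-1, 1]%classic.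
pose K := \big[setU/set0]_(j | P j) [set b : I -> R | forall i, box j i (b i)].
have K_cover b j : P j -> b j = 1 -> (forall i, `|b i| <= 1) -> K b.
  move=> Pj bj1 b_le1; rewrite /K -bigcup_seq_cond.
  exists j; first by rewrite /= mem_index_enum.
  by move=> i; rewrite /box; case: eqP => [->|_] //=; rewrite in_itv /= -ler_norml.
have K_compact : compact K.
  apply: bigsetU_compact => j _; apply: tychonoff => i; rewrite /box.
  by case: (i == j); [exact: compact_set1|exact: segment_compact].
have norm_cont : {within K, continuous (fun b => `|lincomb b|)}.
  apply: continuous_subspaceT => b.
  exact: continuous_comp (@lincomb_continuous b) (@norm_continuous _ _ _).
have K_j0 : K (fun i => if i == j0 then 1 else 0).
  apply: (K_cover _ j0 Pj0); first by rewrite eqxx.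
  by move=> i; case: eqP; rewrite ?normr1 ?normr0.
have [c Kc c_min] := compact_EVT_min (ex_intro _ _ K_j0) K_compact norm_cont.
exists `|lincomb c|; last first.
  by move=> b j Pj bj1 b_le1; exact: c_min _ (mem_set (K_cover b j Pj bj1 b_le1)).
rewrite normr_gt0; apply/eqP => c_null.
move: Kc; rewrite inE /K -bigcup_seq_cond => -[j /andP[_ Pj] c_box].
have := lincomb_free c_null Pj; have := c_box j; rewrite /box eqxx /= => ->.
by move/eqP; rewrite oner_eq0.
Qed.

Lemma lincomb_coercive :
  exists2 m : R, 0 < m & forall a j, P j -> m * `|a j| <= `|lincomb a|.
Proof.
have [m m_gt0 m_le] := lincomb_unit_bounded_below.
exists m => // a j Pj.
have [k Pk k_max] : exists2 k, P k & forall i, P i -> `|a i| <= `|a k|.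
  by case: (arg_maxP (fun i => `|a i|) Pj) => k; exists k.
have [ak0|ak_neq0] := eqVneq (a k) 0.
  have := k_max j Pj; rewrite ak0 normr0 normr_le0 => /eqP ->.
  by rewrite normr0 mulr0.
pose b i := if P i then a i / a k else 0.
have lincomb_b : lincomb b = (a k)^-1 *: lincomb a.
  rewrite /lincomb scaler_sumr; apply: eq_bigr => i Pi.
  by rewrite /b Pi scalerA mulrC.
have b_le1 i : `|b i| <= 1.
  rewrite /b; case: ifP => Pi; last by rewrite normr0.
  by rewrite normrM normrV ?unitfE // ler_pdivrMr ?normr_gt0 // mul1r k_max.
have bk1 : b k = 1 by rewrite /b Pk divff.
have := m_le b k Pk bk1 b_le1.
rewrite lincomb_b normrZ normrV ?unitfE // => m_le_a.
apply: le_trans (ler_wpM2l (ltW m_gt0) (k_max j Pj)) _.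
by rewrite -ler_pdivlMr ?normr_gt0 // mulrC.
Qed.

Lemma gen_cone_nearest (v : H) : exists p, nearest_point gen_cone v p.
Proof.
have [m m_gt0 m_le] := lincomb_coercive.
(* Coefficients beyond M give points farther from v than 0 is. *)
pose M := 2 * `|v| / m.
have mM : m * M = 2 * `|v| by rewrite /M mulrC divfK // gt_eqF.
pose B := [set a : I -> R | forall i, `[0, M]%classic (a i)].
have M_ge0 : 0 <= M by rewrite divr_ge0 ?mulr_ge0 // ltW.
have B0 : B (fun=> 0) by move=> i; rewrite /= in_itv /= lexx M_ge0.
have B_compact : compact B.
  apply: (@tychonoff _ (fun=> R) (fun=> `[0, M]%classic)) => i.
  exact: segment_compact.
have dist_cont : {within B, continuous (fun a => `|v - lincomb a|)}.
  apply: continuous_subspaceT => a.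
  apply: (@continuous_comp _ _ _ (fun a => v - lincomb a)).
    exact: continuousB (@cst_continuous _ _ v a) (@lincomb_continuous a).
  exact: norm_continuous.
have [c Bc c_min] := compact_EVT_min (ex_intro _ _ B0) B_compact dist_cont.
have c_le_v : `|v - lincomb c| <= `|v|.
  have lincomb0 : lincomb (fun=> 0) = 0.
    by rewrite /lincomb big1 // => i _; rewrite scale0r.
  by have := c_min _ (mem_set B0); rewrite lincomb0 subr0.
exists (lincomb c); split.
  exists c; split => // i; move: Bc; rewrite inE => /(_ i).
  by rewrite /= in_itv /= => /andP[].
move=> _ [a [a_ge0 ->]].
have [[j /andP[Pj M_lt_aj]]|a_le_M] := pselect (exists j, P j && (M < a j)).
  have := m_le a j Pj; rewrite ger0_norm // => maj_le.
  have : m * M < m * a j by rewrite ltr_pM2l.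
  have := ler_normD (lincomb a - v) v; rewrite subrK distrC.
  lra.
pose a' i := if P i then a i else 0.
have lincomb_a' : lincomb a' = lincomb a by apply: eq_bigr => i Pi; rewrite /a' Pi.
rewrite -lincomb_a'; apply/c_min/mem_set => i; rewrite /a' /= in_itv /=.
case Pi: (P i); last by rewrite lexx M_ge0.
rewrite a_ge0 leNgt /=; apply/negP => M_lt_ai.
by apply: a_le_M; exists i; rewrite Pi.
Qed.

End FinitelyGeneratedCone.

Lemma KKT_point_iff_active_cone (R : realType) (H : normedModType R)
  (I : finType) (g : I -> H -> R) (J' : H -> H) (g' : I -> H -> H) (u : H) :
  feasible g u -> KKT_point g J' g' u <-> active_cone g g' u (- J' u).
Proof.
move=> fu; split => [[_ [mu [mu_ge0 [J'_eq slack]]]]|[a [a_ge0 J'_eq]]].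
  exists mu; split => //; rewrite J'_eq (bigID (active g u)) /= [X in _ + X]big1 ?addr0 //.
  move=> i /negbTE inactive_i.
  have /eqP := slack i; rewrite mulf_eq0 (inactive_i : (g i u == 0) = false) orbF.
  by move/eqP ->; rewrite scale0r.
split => //; exists (fun i => if active g u i then a i else 0).
split; first by move=> i; case: ifP.
split; first by rewrite J'_eq big_mkcond; apply: eq_bigr => i _; case: ifP; rewrite ?scale0r.
by move=> i; rewrite /active; case: eqP => [->|_]; rewrite ?mulr0 ?mul0r.
Qed.

Theorem lemma2 (R : realType) (H : completeNormedModType R)
  (ip : H -> H -> R) (I : finType)
  (J : H -> R) (J' : H -> H) (g : I -> H -> R) (g' : I -> H -> H) :
  is_inner_product ip ->
  C1_with_gradient ip J J' ->
  (forall i, C1_with_gradient ip (g i) (g' i)) ->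
  (forall u, feasible g u -> (exists i, active g u i) ->
     active_lin_indep g g' u) ->
  forall u, feasible g u ->
    (KKT_point g J' g' u <-> dA J' g g' u = 0).
Proof.
move=> _ _ _ lin_indep u fu.
have free : forall a, lincomb (active g u) (g'^~ u) a = 0 ->
    forall i, active g u i -> a i = 0.
  by move=> a a0 i ui; exact: lin_indep u fu (ex_intro _ i ui) a a0 i ui.
have nearest : exists p, nearest_point (active_cone g g' u) (- J' u) p.
  exact: gen_cone_nearest free (- J' u).
rewrite KKT_point_iff_active_cone // -(metric_proj_id nearest) /dA.
by split => [->|/subr0_eq <-]; rewrite ?subrr.
Qed.
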